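(* Let $G$ be the graph with vertex set $\{1,\dots,12\}$ and edge set consisting of $12,23,34$; $87,76,65$; $12\text{-}11, 11\text{-}10, 10\text{-}9$; $12\text{-}8, 8\text{-}11, 11\text{-}6, 6\text{-}9, 9\text{-}5, 5\text{-}10, 10\text{-}7, 7\text{-}12$; $17, 73, 35$; $82, 26, 64$; $27$; $36$; and all eight edges between $\{2,3\}$ and $\{9,10,11,12\}$. Then: $G$ is prime, $\{P_5,\overline{P_5},C_5\}$-free and not a split graph; $G$ is isomorphic to $\overline{G}$ via the map $1\mapsto3,2\mapsto1,3\mapsto4,4\mapsto2,5\mapsto7,6\mapsto5,7\mapsto8,8\mapsto6,9\mapsto11,10\mapsto9,11\mapsto12,12\mapsto10$; the simplicial vertices of $G$ are exactly $1,4$ and the antisimplicial vertices of $G$ are exactly $2,3$; and there is no $F\in\{G,\overline{G}\}$ with an induced subgraph of $F$ isomorphic to $H_6$ whose two degree-one vertices are simplicial in $F$ and whose two degree-three vertices are both antisimplicial in $F$.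
   Context: All graphs are finite and simple; in the edge list ''$a\text{-}b$'' or ''$ab$'' denotes an edge between vertices $a$ and $b$. $P_n$ is the path on $n$ vertices, $C_n$ the cycle of length $n$, $\overline{G}$ the complement. $G$ is $H$-free if it has no induced subgraph isomorphic to $H$. A vertex $b\notin X$ is mixed on $X$ if it has both a neighbor and a non-neighbor in $X$. A homogeneous set is a set $X\subseteq V(G)$ with $1<|X|<|V(G)|$ such that no vertex outside $X$ is mixed on $X$. $G$ is prime if $|V(G)|\ge4$ and has no homogeneous set. A vertex $v$ is simplicial if $N(v)$ is a clique, antisimplicial if $V(G)\setminus N(v)$ is a stable set. A split graph is one whose vertex set can be partitioned into a stable set and a clique. $H_6$ is the graph with vertex set $\{v_1,\dots,v_6\}$ and edge set $\{v_1v_2,v_2v_3,v_3v_4,v_2v_5,v_3v_6,v_5v_6\}$. *)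

From mathcomp Require Import all_boot.
Set Implicit Arguments. Unset Strict Implicit. Unset Printing Implicit Defensive.

(* A finite simple graph: a symmetric irreflexive relation on a finType. *)
Section Graphs.
Variable T : finType.
Implicit Types (e : rel T) (X S K : {set T}).

Definition complement e : rel T := fun x y => (x != y) && ~~ e x y.

Definition mixed e (b : T) X : Prop :=
  b \notin X /\ (exists2 x, x \in X & e b x) /\ (exists2 y, y \in X & ~~ e b y).

Definition homogeneous e X : Prop :=
  1 < #|X| < #|T| /\ forall b, b \notin X -> ~ mixed e b X.

Definition prime_graph e : Prop :=
  4 <= #|T| /\ forall X : {set T}, ~ homogeneous e X.

Definition clique e X : Prop := forall x y, x \in X -> y \in X -> x != y -> e x y.
Definition stable e X : Prop := forall x y, x \in X -> y \in X -> ~~ e x y.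

Definition nbhd e (v : T) : {set T} := [set y | e v y].

Definition simplicial e v : Prop := clique e (nbhd e v).
Definition antisimplicial e v : Prop := stable e (~: nbhd e v).

Definition split_graph e : Prop :=
  exists S K : {set T}, [/\ S :&: K = set0, S :|: K = setT, stable e S & clique e K].
End Graphs.

Definition induced_embedding (U T : finType) (eH : rel U) (e : rel T) (f : U -> T) : Prop :=
  injective f /\ forall x y, eH x y = e (f x) (f y).

Definition has_induced (U T : finType) (eH : rel U) (e : rel T) : Prop :=
  exists f : U -> T, induced_embedding eH e f.

Definition H_free (U T : finType) (eH : rel U) (e : rel T) : Prop := ~ has_induced eH e.

Definition deg (T : finType) (e : rel T) (v : T) : nat := #|[set y | e v y]|.

(* Graph from an edge list over labels 1..n, vertex i : 'I_n has label i+1 *)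
Definition rel_of_edges (n : nat) (E : seq (nat * nat)) : rel 'I_n :=
  fun x y => ((x.+1, y.+1) \in E) || ((y.+1, x.+1) \in E).

Definition P5 : rel 'I_5 := rel_of_edges [:: (1,2); (2,3); (3,4); (4,5)].
Definition C5 : rel 'I_5 := rel_of_edges [:: (1,2); (2,3); (3,4); (4,5); (5,1)].
Definition H6 : rel 'I_6 :=
  rel_of_edges [:: (1,2); (2,3); (3,4); (2,5); (3,6); (5,6)].

Definition G_edges : seq (nat * nat) :=
  [:: (1,2); (2,3); (3,4);
      (8,7); (7,6); (6,5);
      (12,11); (11,10); (10,9);
      (12,8); (8,11); (11,6); (6,9); (9,5); (5,10); (10,7); (7,12);
      (1,7); (7,3); (3,5);
      (8,2); (2,6); (6,4);
      (2,7);
      (3,6);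
      (2,9); (2,10); (2,11); (2,12); (3,9); (3,10); (3,11); (3,12)].

Definition G : rel 'I_12 := rel_of_edges G_edges.

Definition sigma_table : seq nat := [:: 3; 1; 4; 2; 7; 5; 8; 6; 11; 9; 12; 10].
Definition sigma (x : 'I_12) : 'I_12 := inord (nth 1 sigma_table x).-1.

Definition vtx (k : nat) : 'I_12 := inord k.-1.

From mathcomp Require Import all_boot.
From Stdlib Require Import FunctionalExtensionality.
Set Implicit Arguments. Unset Strict Implicit. Unset Printing Implicit Defensive.

(* Every claim of the theorem is a finite statement about the 12-vertex graph
   G, and is proved by certified computation: for each Prop-level notion (clique, stable set, simplicial vertex, homogeneous set, split
   partition, induced embedding) we give a boolean test that quantifies over an
   explicit list V of all vertices, and prove it sound.
   - Subsets of the vertex set are enumerated as the sublists of V; a set X is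
     represented by the sublist of V of its members.  Primality and splitness
     reduce to tests over these 2^|V| sublists.
   - Induced embeddings of a pattern graph H (possibly subject to a constraint
     on where each vertex of H may land) are searched for by backtracking,
     placing the vertices of H one at a time; every embedding survives the
     search, so an empty search refutes the existence of an embedding.
   The lists of ordinals are built by hand (MathComp's enumeration of 'I_n
   matches on opaque proofs and does not reduce), G is replaced by an equal
   relation reading a precomputed adjacency table, and each concrete test is
   closed by vm_compute. *)

(* The ordinal k mod n.+1; unlike inord, it reduces by computation. *)
Definition ord_of (n k : nat) : 'I_n.+1 := Ordinal (ltn_pmod k (ltn0Sn n)).

Lemma val_ord_of n k : k <= n -> val (ord_of n k) = k.
Proof. by move=> le_kn; rewrite /= modn_small. Qed.

Lemma inord_ord_of n k : k <= n -> inord k = ord_of n k.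
Proof. by move=> le_kn; apply: ord_inj; rewrite inordK ?val_ord_of. Qed.

Definition ord_list (n : nat) : seq 'I_n.+1 := map (ord_of n) (iota 0 n.+1).

Lemma mem_ord_list n (x : 'I_n.+1) : x \in ord_list n.
Proof.
apply/mapP; exists (val x); first by rewrite mem_iota ltn_ord.
by apply: val_inj; rewrite val_ord_of // -ltnS ltn_ord.
Qed.

Lemma ord_list_uniq n : uniq (ord_list n).
Proof.
rewrite map_inj_in_uniq ?iota_uniq // => i j.
rewrite !mem_iota !add0n !ltnS => /andP[_ le_in] /andP[_ le_jn].
by move/(congr1 val); rewrite !val_ord_of.
Qed.

Lemma nth_ord_list n (x0 x : 'I_n.+1) : nth x0 (ord_list n) x = x.
Proof.
apply: val_inj; rewrite (nth_map 0) ?size_iota // nth_iota // add0n.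
by rewrite val_ord_of // -ltnS.
Qed.

(* A relation on ordinals, re-expressed through its adjacency matrix: equal to
   the original, but each evaluation is a table lookup once the table is built. *)
Definition tabulate n (e : rel 'I_n.+1) : rel 'I_n.+1 :=
  let t := [seq [seq e x y | y <- ord_list n] | x <- ord_list n] in
  fun x y => nth false (nth [::] t x) y.

Lemma tabulateE n (e : rel 'I_n.+1) : tabulate e = e.
Proof.
apply: functional_extensionality => x; apply: functional_extensionality => y.
by rewrite /tabulate (nth_map x) ?(nth_map y) ?size_map ?size_iota ?nth_ord_list.
Qed.

Fixpoint sublists (T : Type) (s : seq T) : seq (seq T) :=
  if s is x :: s' then let r := sublists s' in map (cons x) r ++ r else [:: [::]].

Lemma mem_sublists (T : eqType) (s r : seq T) : subseq r s -> r \in sublists s.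
Proof.
elim: s r => [|x s IHs] [|y r] //= => [_|]; rewrite mem_cat.
  by rewrite IHs ?orbT ?sub0seq.
case: eqP => [-> /IHs r_sub | _ /IHs ->]; last by rewrite orbT.
by rewrite mem_map ?r_sub // => ? ? [].
Qed.

Section VertexList.
Variables (T : finType) (V : seq T).
Hypotheses (V_uniq : uniq V) (V_complete : forall x, x \in V).

Lemma allV (p : pred T) : reflect (forall x, p x) (all p V).
Proof. by apply: (iffP allP) => [p_all x | p_all x _]; apply: p_all. Qed.

Lemma card_count (p : pred T) : #|p| = count p V.
Proof.
rewrite (@eq_card _ _ (mem [seq x <- V | p x])) => [|x]; last first.
  by rewrite mem_filter V_complete andbT.
by move/card_uniqP: (filter_uniq p V_uniq) => ->; rewrite size_filter.
Qed.

Lemma card_V : #|T| = size V.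
Proof. by rewrite card_count count_predT. Qed.

Lemma deg_count (e : rel T) v : deg e v = count (e v) V.
Proof. by rewrite /deg -card_count; apply: eq_card => x; rewrite inE. Qed.

Lemma bijective_check (f : T -> T) :
  all (fun x => all (fun y => (f x == f y) ==> (x == y)) V) V -> bijective f.
Proof.
move=> /allV f_inj; apply: injF_bij => x y /eqP fxy.
by have /allV/(_ y)/implyP/(_ fxy)/eqP := f_inj x.
Qed.

Lemma two_point_check (p : pred T) (Q : T -> Prop) (a b : T) :
  (forall v, reflect (Q v) (p v)) -> all (fun v => p v == (v \in [:: a; b])) V ->
  forall v, Q v <-> v = a \/ v = b.
Proof.
move=> pP /allV check v; have /eqP := check v; rewrite !inE => pv.
split=> [/pP | ab_v]; first by rewrite pv => /orP[] /eqP; [left | right].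
by apply/pP; rewrite pv; case: ab_v => ->; rewrite eqxx ?orbT.
Qed.
End VertexList.

Section GraphChecks.
Variables (T : finType) (V : seq T) (e : rel T).
Hypotheses (V_uniq : uniq V) (V_complete : forall x, x \in V).

Definition clique_list (A : seq T) : bool :=
  all (fun x => all (fun y => (x != y) ==> e x y) A) A.
Definition stable_list (A : seq T) : bool :=
  all (fun x => all (fun y => ~~ e x y) A) A.

Lemma cliqueP (X : {set T}) (A : seq T) : X =i A -> reflect (clique e X) (clique_list A).
Proof.
move=> eqXA; apply: (iffP allP) => [cl x y Xx Xy neq_xy | cl x Ax].
  rewrite eqXA in Xx; rewrite eqXA in Xy.
  by have /allP/(_ y Xy)/implyP := cl x Xx; apply.
by apply/allP => y Ay; apply/implyP; apply: cl; rewrite eqXA.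
Qed.

Lemma stableP (X : {set T}) (A : seq T) : X =i A -> reflect (stable e X) (stable_list A).
Proof.
move=> eqXA; apply: (iffP allP) => [st x y Xx Xy | st x Ax].
  rewrite eqXA in Xx; rewrite eqXA in Xy.
  by have /allP/(_ y Xy) := st x Xx.
by apply/allP => y Ay; apply: st; rewrite eqXA.
Qed.

Definition simplicialb (v : T) : bool := clique_list [seq x <- V | e v x].
Definition antisimplicialb (v : T) : bool := stable_list [seq x <- V | ~~ e v x].

Lemma simplicialP v : reflect (simplicial e v) (simplicialb v).
Proof. by apply: cliqueP => x; rewrite inE mem_filter V_complete andbT. Qed.

Lemma antisimplicialP v : reflect (antisimplicial e v) (antisimplicialb v).
Proof. by apply: stableP => x; rewrite !inE mem_filter V_complete andbT. Qed.

Definition list_of_set (X : {set T}) : seq T := [seq x <- V | x \in X].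

Lemma mem_list_of_set X : list_of_set X =i X.
Proof. by move=> x; rewrite mem_filter V_complete andbT. Qed.

Lemma size_list_of_set X : size (list_of_set X) = #|X|.
Proof. by rewrite size_filter (card_count V_uniq V_complete). Qed.

Lemma list_of_set_sublist X : list_of_set X \in sublists V.
Proof. exact/mem_sublists/filter_subseq. Qed.

Definition split_graphb : bool :=
  has (fun S => stable_list S && clique_list [seq x <- V | x \notin S]) (sublists V).

Lemma split_graphb_complete : split_graph e -> split_graphb.
Proof.
move=> [S [K [disjSK coverSK stS clK]]]; apply/hasP; exists (list_of_set S).
  exact: list_of_set_sublist.
have inK x : (x \in K) = (x \notin S).
  move/setP/(_ x): disjSK; move/setP/(_ x): coverSK; rewrite !inE.
  by case: (x \in S); case: (x \in K).
apply/andP; split; [apply/(stableP (X := S)) | apply/(cliqueP (X := K))] => // x.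
  by rewrite mem_list_of_set.
by rewrite inK mem_filter mem_list_of_set V_complete andbT.
Qed.

Definition unmixed (A : seq T) (b : T) : bool :=
  [|| b \in A, all (e b) A | ~~ has (e b) A].
Definition homogeneousb (A : seq T) : bool := (1 < size A < size V) && all (unmixed A) V.
Definition primeb : bool := (3 < size V) && ~~ has homogeneousb (sublists V).

Lemma homogeneousb_complete X : homogeneous e X -> homogeneousb (list_of_set X).
Proof.
move=> [sizeX unmixedX]; rewrite /homogeneousb size_list_of_set.
rewrite -(card_V V_uniq V_complete) sizeX /=.
apply/allP => b _; rewrite /unmixed mem_list_of_set.
case: (boolP (b \in X)) => //= bX.
case: (boolP (has (e b) _)) => [/hasP[x xX ebx] | _]; rewrite /= ?orbT // orbF.
apply/allP => y yX; apply/negPn/negP => neby.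
by apply: (unmixedX b bX); split; [|split; [exists x | exists y]]; rewrite // -mem_list_of_set.
Qed.

Lemma primeb_sound : primeb -> prime_graph e.
Proof.
move=> /andP[sizeV noHom]; split; first by rewrite (card_V V_uniq V_complete).
move=> X /homogeneousb_complete homX; move/hasP: noHom; apply.
by exists (list_of_set X); first exact: list_of_set_sublist.
Qed.
End GraphChecks.

Section EmbeddingSearch.
Variables (U T : eqType) (eH : rel U) (e : rel T) (V : seq T) (P : U -> T -> bool).
Hypothesis V_complete : forall v, v \in V.

Definition consistent (placed : seq (U * T)) (u : U) (v : T) : bool :=
  [&& v \notin map snd placed, P u v &
      all (fun p => (eH p.1 u == e p.2 v) && (eH u p.1 == e v p.2)) placed].

(* The conditional keeps the search lazy under call-by-value evaluation. *)
Fixpoint extendable (placed : seq (U * T)) (todo : seq U) : bool :=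
  if todo is u :: todo' then
    has (fun v => if consistent placed u v then extendable ((u, v) :: placed) todo'
                  else false) V
  else true.

Lemma extendable_embedding (f : U -> T) :
    injective f -> (forall x y, eH x y = e (f x) (f y)) -> (forall u, P u (f u)) ->
  forall todo placed, uniq todo -> {in todo, forall u, u \notin placed} ->
  extendable [seq (u, f u) | u <- placed] todo.
Proof.
move=> f_inj f_emb Pf; elim=> [//|u todo IH] placed /= /andP[u_new todo_uniq] fresh.
apply/hasP; exists (f u) => //.
have -> : consistent [seq (w, f w) | w <- placed] u (f u).
  rewrite /consistent; have -> : map snd [seq (w, f w) | w <- placed] = map f placed.
    by rewrite -map_comp.
  rewrite Pf (mem_map f_inj) fresh ?mem_head //=.
  by apply/allP => _ /mapP[w _ ->] /=; rewrite !f_emb !eqxx.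
apply: (IH (u :: placed)) => // w w_todo.
rewrite in_cons negb_or fresh ?inE ?w_todo ?orbT // andbT.
by apply: contraNneq u_new => <-.
Qed.

Lemma no_constrained_embedding (W : seq U) : uniq W -> ~~ extendable [::] W ->
  ~ exists f, [/\ injective f, forall x y, eH x y = e (f x) (f y) & forall u, P u (f u)].
Proof.
move=> W_uniq /negP noext [f [f_inj f_emb Pf]]; apply: noext.
exact: (extendable_embedding f_inj f_emb Pf (placed := [::])).
Qed.
End EmbeddingSearch.

Lemma H_free_check (U T : finType) (eH : rel U) (e : rel T) (W : seq U) (V : seq T) :
  (forall v, v \in V) -> uniq W -> ~~ extendable eH e V (fun _ _ => true) [::] W ->
  H_free eH e.
Proof.
move=> V_complete W_uniq noext [f [f_inj f_emb]].
by apply: (no_constrained_embedding V_complete W_uniq noext); exists f.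
Qed.

Definition degree_rooted (U T : finType) (W : seq U) (V : seq T) (eH : rel U) (F : rel T)
    (u : U) (v : T) : bool :=
  ((count (eH u) W == 1) ==> simplicialb V F v)
  && ((count (eH u) W == 3) ==> antisimplicialb V F v).

Lemma degree_rooted_embedding (U T : finType) (W : seq U) (V : seq T)
    (eH : rel U) (F : rel T) (f : U -> T) :
  uniq W -> (forall u, u \in W) -> (forall v, v \in V) ->
  (forall x, deg eH x = 1 -> simplicial F (f x)) ->
  (forall x, deg eH x = 3 -> antisimplicial F (f x)) ->
  forall u, degree_rooted W V eH F u (f u).
Proof.
move=> W_uniq W_complete V_complete ends mids u.
rewrite /degree_rooted -(deg_count W_uniq W_complete).
by apply/andP; split; apply/implyP => /eqP du;
  [apply/(simplicialP _ V_complete); apply: ends | apply/(antisimplicialP _ V_complete); apply: mids].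
Qed.

Notation V12 := (ord_list 11).

Definition Gt : rel 'I_12 := tabulate G.

Definition sigma_comp (x : 'I_12) : 'I_12 := ord_of 11 (nth 1 sigma_table x).-1.

Lemma sigmaE : sigma =1 sigma_comp.
Proof.
move=> x; apply: inord_ord_of.
have /allP := (isT : all (fun k => k.-1 <= 11) sigma_table); apply.
by rewrite mem_nth.
Qed.

Lemma vtxE k : 0 < k <= 12 -> vtx k = ord_of 11 k.-1.
Proof. by move=> k_range; apply: inord_ord_of; case: k k_range. Qed.

Definition H6_rooted (F : rel 'I_12) : 'I_6 -> 'I_12 -> bool :=
  degree_rooted (ord_list 5) V12 H6 F.

Lemma Gt_prime : primeb V12 Gt.
Proof. by vm_compute. Qed.

Lemma Gt_not_split : ~~ split_graphb V12 Gt.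
Proof. by vm_compute. Qed.

Lemma Gt_no_P5 : ~~ extendable P5 Gt V12 (fun _ _ => true) [::] (ord_list 4).
Proof. by vm_compute. Qed.

Lemma Gt_no_coP5 : ~~ extendable (complement P5) Gt V12 (fun _ _ => true) [::] (ord_list 4).
Proof. by vm_compute. Qed.

Lemma Gt_no_C5 : ~~ extendable C5 Gt V12 (fun _ _ => true) [::] (ord_list 4).
Proof. by vm_compute. Qed.

Lemma sigma_comp_injective :
  all (fun x => all (fun y => (sigma_comp x == sigma_comp y) ==> (x == y)) V12) V12.
Proof. by vm_compute. Qed.

Lemma sigma_comp_complements :
  all (fun x => all (fun y => Gt x y == complement Gt (sigma_comp x) (sigma_comp y)) V12) V12.
Proof. by vm_compute. Qed.

Lemma Gt_simplicial : all (fun v => simplicialb V12 Gt v == (v \in [:: ord_of 11 0; ord_of 11 3])) V12.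
Proof. by vm_compute. Qed.

Lemma Gt_antisimplicial :
  all (fun v => antisimplicialb V12 Gt v == (v \in [:: ord_of 11 1; ord_of 11 2])) V12.
Proof. by vm_compute. Qed.

Lemma Gt_no_rooted_H6 : ~~ extendable H6 Gt V12 (H6_rooted Gt) [::] (ord_list 5).
Proof. by vm_compute. Qed.

Lemma coGt_no_rooted_H6 :
  ~~ extendable H6 (complement Gt) V12 (H6_rooted (complement Gt)) [::] (ord_list 5).
Proof. by vm_compute. Qed.

Theorem mainTheorem19 :
  [/\ prime_graph G,
      H_free P5 G /\ H_free (complement P5) G /\ H_free C5 G,
      ~ split_graph G /\
      bijective sigma /\ (forall x y : 'I_12, G x y = complement G (sigma x) (sigma y)),
      (forall v : 'I_12, simplicial G v <-> (v = vtx 1 \/ v = vtx 4))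
        /\ (forall v : 'I_12, antisimplicial G v <-> (v = vtx 2 \/ v = vtx 3))
    & forall F : rel 'I_12, (F = G \/ F = complement G) ->
        ~ exists f : 'I_6 -> 'I_12,
            [/\ induced_embedding H6 F f,
                (forall x, deg H6 x = 1 -> simplicial F (f x))
              & (forall x, deg H6 x = 3 -> antisimplicial F (f x))]].
Proof.
have V12_uniq := ord_list_uniq 11; have V12_complete := @mem_ord_list 11.
rewrite -(tabulateE G) -/Gt; split.
- exact: (primeb_sound V12_uniq V12_complete Gt_prime).
- by split; [|split]; apply: H_free_check V12_complete (ord_list_uniq 4) _;
    [exact: Gt_no_P5 | exact: Gt_no_coP5 | exact: Gt_no_C5].
- split; first by move/(split_graphb_complete V12_complete); apply/negP: Gt_not_split.
  split; first by apply: (eq_bij (bijective_check V12_complete sigma_comp_injective)) => x;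
    rewrite sigmaE.
  move=> x y; rewrite !sigmaE.
  by have /(allV V12_complete)/(_ x)/(allV V12_complete)/(_ y)/eqP := sigma_comp_complements.
- rewrite !vtxE //; split.
    exact (two_point_check V12_complete (simplicialP Gt V12_complete) Gt_simplicial).
  exact (two_point_check V12_complete (antisimplicialP Gt V12_complete) Gt_antisimplicial).
- move=> F F_def [f [[f_inj f_emb] ends mids]].
  have no_rooted_H6 : ~~ extendable H6 F V12 (H6_rooted F) [::] (ord_list 5).
    by case: F_def => ->; [exact: Gt_no_rooted_H6 | exact: coGt_no_rooted_H6].
  apply: (no_constrained_embedding V12_complete (ord_list_uniq 5) no_rooted_H6).
  exists f; split=> //.
  exact: degree_rooted_embedding (ord_list_uniq 5) (@mem_ord_list 5) V12_complete ends mids.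
Qed.
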